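(* In the line network model (see context), fix $t\ge1$ and view $R_t:=\rho_{\ell+1}(t)$ as a function $g(z_{1,1},\dots,z_{1,\ell},\dots,z_{t,1},\dots,z_{t,\ell})$ of the link states $z_{s,j}\in\{0,1\}$, $1\le s\le t$, $1\le j\le\ell$. Then $g$ is $1$-Lipschitz in each coordinate: changing the value of a single $z_{s,j}$ (all others fixed) changes the value of $g$ by at most $1$.
   Context: Line network model. Fix integers $\ell\ge1$, $n\ge1$. Given link states $z_{t,i}\in\{0,1\}$ ($1$ = link $i$ ON at step $t$), the rank $\rho_i(t)$ of node $N^{(i)}$ after $t$ steps satisfies $\rho_1(t)=n$, $\rho_i(0)=0$ for $2\le i\le\ell+1$, and $\rho_{i+1}(t)=\rho_{i+1}(t-1)+z_{t,i}\mathbf 1\{\rho_i(t-1)>\rho_{i+1}(t-1)\}$ for $t\ge1$, $1\le i\le\ell$. $R_t=\rho_{\ell+1}(t)$ is the number of innovative (linearly independent) packets received at the destination $N^{(\ell+1)}$ after $t$ steps. *)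

From mathcomp Require Import all_boot.
Set Implicit Arguments. Unset Strict Implicit. Unset Printing Implicit Defensive.

(* Link states: z t i = true iff link i (from node i to node i+1) is ON at
   step t (1-indexed: t >= 1, 1 <= i <= l).
   rank n z t i = rho_i(t), the rank of node N^(i) after t steps,
   for nodes 1 <= i <= l+1 (values at other indices are irrelevant). *)
Fixpoint rank (n : nat) (z : nat -> nat -> bool) (t : nat) (i : nat) : nat :=
  match t with
  | 0 => if i == 1 then n else 0
  | t'.+1 =>
      if i == 1 then n
      else rank n z t' i +
           (z t'.+1 i.-1 && (rank n z t' i.-1 > rank n z t' i))
  end.

Definition R (l n : nat) (z : nat -> nat -> bool) (t : nat) : nat :=
  rank n z t l.+1.

From mathcomp Require Import all_boot zify.

(* Order link-state assignments pointwise (false < true).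
   1. Monotonicity: every rank rho_i(t) is nondecreasing in the link states,
      because one step of the recursion, rho + [z && (rho' > rho)], is
      nondecreasing in the link state z and in the ranks rho, rho'.
   2. One-time perturbation: if z1 <= z2 and they agree at every time except
      s, then rank z2 <= rank z1 + 1 everywhere.  Before time s the ranks
      coincide; at time s the single step adds at most one; after time s the
      recursion preserves the sandwich rank z1 <= rank z2 <= rank z1 + 1.
   3. Changing the single state z_{s,j} turns z into z'; the pointwise meet
      and join of z and z' satisfy the hypotheses of 2 and bracket both z and
      z' by 1, so R_t(z) and R_t(z') differ by at most one. *)

Definition step_update (a a' : nat) (c : bool) : nat := a + (c && (a < a')).

Lemma rank_succ n z t i :
  rank n z t.+1 i = if i == 1 then n else step_update (rank n z t i) (rank n z t i.-1) (z t.+1 i.-1).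
Proof. by []. Qed.

Lemma step_update_mono a b a' b' (c1 c2 : bool) :
  a <= b -> a' <= b' -> (c1 ==> c2) -> step_update a a' c1 <= step_update b b' c2.
Proof.
rewrite /step_update => hab hab'; case: c1; case: c2 => //= _;
by case: (ltnP a a'); case: (ltnP b b') => /=; lia.
Qed.

Lemma step_update_sandwich a b a' b' (c : bool) :
  a <= b <= a.+1 -> a' <= b' <= a'.+1 -> step_update b b' c <= (step_update a a' c).+1.
Proof.
rewrite /step_update => /andP[? ?] /andP[? ?]; case: c => /=; last lia.
by case: (ltnP a a'); case: (ltnP b b') => /=; lia.
Qed.

Lemma step_update_relink a a' (c1 c2 : bool) :
  step_update a a' c2 <= (step_update a a' c1).+1.
Proof. by rewrite /step_update; case: c1; case: c2; case: (a < a') => /=; lia. Qed.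

Definition links_le (z1 z2 : nat -> nat -> bool) : Prop :=
  forall u i, z1 u i ==> z2 u i.

Section RankPerturbation.

Variable n : nat.

Lemma rank_mono {z1 z2} : links_le z1 z2 -> forall t i, rank n z1 t i <= rank n z2 t i.
Proof.
move=> hz; elim=> [|t IH] i //; rewrite !rank_succ; case: (i == 1) => //.
exact: step_update_mono.
Qed.

Lemma rank_agree_before {z1 z2 s} :
  (forall u i, u != s -> z1 u i = z2 u i) -> forall t i, t < s -> rank n z1 t i = rank n z2 t i.
Proof.
move=> hz; elim=> [|t IH] i ht //; rewrite !rank_succ !IH ?(ltnW ht) // hz //.
by rewrite neq_ltn ht.
Qed.

Lemma rank_perturb_one_step {z1 z2 s} :
  links_le z1 z2 -> (forall u i, u != s -> z1 u i = z2 u i) ->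
  forall t i, rank n z2 t i <= (rank n z1 t i).+1.
Proof.
move=> hle hz; elim=> [|t IH] i //; rewrite !rank_succ; case: (i == 1) => //.
have [ts | tNs] := eqVneq t.+1 s.
- rewrite !(rank_agree_before hz) ?ts //; exact: step_update_relink.
- by rewrite hz // step_update_sandwich ?rank_mono ?IH.
Qed.

End RankPerturbation.

Theorem mainTheorem6 (l n t : nat) (hl : 1 <= l) (hn : 1 <= n) (ht : 1 <= t)
  (z z' : nat -> nat -> bool) (s j : nat)
  (hs : 1 <= s <= t) (hj : 1 <= j <= l)
  (hzz' : forall u i, (u, i) != (s, j) -> z u i = z' u i) :
  R l n z t <= (R l n z' t).+1 /\ R l n z' t <= (R l n z t).+1.
Proof.
pose zmeet u i := z u i && z' u i.
pose zjoin u i := z u i || z' u i.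
have [meet_z meet_z' z_join z'_join meet_join] : [/\ links_le zmeet z,
    links_le zmeet z', links_le z zjoin, links_le z' zjoin & links_le zmeet zjoin].
  by split=> u i; rewrite /zmeet /zjoin; case: (z u i); case: (z' u i).
have agree_off_s : forall u i, u != s -> zmeet u i = zjoin u i.
  move=> u i us; rewrite /zmeet /zjoin hzz' ?xpair_eqE ?negb_and ?us //.
  by case: (z' u i).
have := rank_perturb_one_step n meet_join agree_off_s t l.+1.
have := rank_mono n meet_z t l.+1; have := rank_mono n meet_z' t l.+1.
have := rank_mono n z_join t l.+1; have := rank_mono n z'_join t l.+1.
rewrite /R; lia.
Qed.
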